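(* Let $d\in\mathbb N$, let $\emptyset\neq\Theta\subset\mathbb R^d$ be an orientable $C^1$-hypersurface of positive reach, let $\mu\colon\mathbb R^d\to\mathbb R^d$ be intrinsic Lipschitz continuous on $\mathbb R^d\setminus\Theta$, and let $\mathfrak n\colon\Theta\to\mathbb R^d$ be a normal vector along $\Theta$. Then for every $x\in\Theta$ and every $s\in\{+,-\}$ the limit $\lim_{h\downarrow0}\mu(x+sh\,\mathfrak n(x))$ exists in $\mathbb R^d$.
   Context: $\|\cdot\|$ is the Euclidean norm. A nonempty $\Theta\subset\mathbb R^d$ is a $C^1$-hypersurface if for every $x\in\Theta$ there are open $U,V$ with $x\in U$ and a $C^1$-diffeomorphism $\phi\colon U\to V$ with $\phi(\Theta\cap U)=(\mathbb R^{d-1}\times\{0\})\cap V$ ($\{0\}$ if $d=1$). A normal vector along $\Theta$ is a continuous unit-length $\mathfrak n\colon\Theta\to\mathbb R^d$ orthogonal at each $x$ to every tangent vector $\gamma'(0)$ of a $C^1$-curve $\gamma$ in $\Theta$ with $\gamma(0)=x$; orientable means one exists. $\mathrm{reach}(\Theta)=\sup\{\varepsilon\ge0:$ every $x$ with $\inf_{y\in\Theta}\|x-y\|<\varepsilon$ has a unique nearest point in $\Theta\}$; positive reach means $\mathrm{reach}(\Theta)>0$. Intrinsic Lipschitz continuity on $A$: $\|f(x)-f(y)\|\le L\rho_A(x,y)$ for all $x,y\in A$, where $\rho_A(x,y)$ is the infimum of the lengths $l(\gamma)=\sup\sum_k\|\gamma(t_k)-\gamma(t_{k-1})\|$ of continuous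 curves $\gamma\colon[0,1]\to A$ from $x$ to $y$. *)

From HB Require Import structures.
From mathcomp Require Import all_boot all_order all_algebra.
From mathcomp Require Import all_classical all_reals all_analysis.
Set Implicit Arguments. Unset Strict Implicit. Unset Printing Implicit Defensive.
Import Order.TTheory GRing.Theory Num.Theory.
Import numFieldNormedType.Exports.
Local Open Scope classical_set_scope.
Local Open Scope ring_scope.

Section Defs.
Variables (R : realType) (d : nat).
Notation V := 'rV[R]_d.

Definition edot (x y : V) : R := \sum_(i < d) x 0 i * y 0 i.
Definition enorm (x : V) : R := Num.sqrt (edot x x).

(* C^1 on an open set U: differentiable at every point of U, and the derivative
   x |-> 'd f x is continuous on U (tested on every direction v, which in finite
   dimension is continuity of the Jacobian). *)
Definition C1_on (U : set V) (f : V -> V) : Prop :=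
  open U /\ (forall x, U x -> differentiable f x) /\
  (forall v : V, {within U, continuous (fun x => 'd f x v)}).

Definition C1_diffeo (U W : set V) (phi : V -> V) : Prop :=
  open U /\ open W /\ C1_on U phi /\
  exists psi : V -> V, C1_on W psi /\
    (forall x, U x -> W (phi x) /\ psi (phi x) = x) /\
    (forall y, W y -> U (psi y) /\ phi (psi y) = y).

(* R^{d-1} x {0}  (= {0} when d = 1) *)
Definition flat_hyperplane : set V := [set y | forall i : 'I_d, i.+1 = d -> y 0 i = 0].

Definition C1_hypersurface (Th : set V) : Prop :=
  Th !=set0 /\
  forall x, Th x -> exists (U W : set V) (phi : V -> V),
    U x /\ C1_diffeo U W phi /\ phi @` (Th `&` U) = flat_hyperplane `&` W.

Definition C1_curve_in (Th : set V) (g : R -> V) : Prop :=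
  exists e : R, 0 < e /\
    (forall t, `|t| < e -> Th (g t)) /\
    (forall t, `|t| < e -> derivable g t 1) /\
    {within [set` `]-e, e[], continuous (derive1 g)}.

Definition normal_vector (Th : set V) (n : V -> V) : Prop :=
  {within Th, continuous n} /\
  (forall x, Th x -> enorm (n x) = 1) /\
  (forall x, Th x -> forall g : R -> V, C1_curve_in Th g -> g 0 = x ->
      edot (n x) (derive1 g 0) = 0).

Definition orientable (Th : set V) : Prop := exists n, normal_vector Th n.

Definition dist_to (Th : set V) (x : V) : R := inf [set enorm (x - y) | y in Th].

Definition unique_nearest (Th : set V) (x : V) : Prop :=
  exists! y, Th y /\ forall z, Th z -> enorm (x - y) <= enorm (x - z).

Definition reach (Th : set V) : \bar R :=
  ereal_sup [set e%:E | e in [set e : R | 0 <= e /\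
      forall x, dist_to Th x < e -> unique_nearest Th x]].

Definition positive_reach (Th : set V) : Prop := (0 < reach Th)%E.

Definition curve_length (g : R -> V) : \bar R :=
  ereal_sup [set l : \bar R | exists (k : nat) (t : nat -> R),
     [/\ t 0%N = 0, t k = 1, (forall i, (i < k)%N -> t i <= t i.+1) &
      l = (\sum_(1 <= i < k.+1) enorm (g (t i) - g (t i.-1)))%:E]].

(* intrinsic distance in A (+oo if no continuous curve in A joins x and y) *)
Definition intrinsic_dist (A : set V) (x y : V) : \bar R :=
  ereal_inf [set curve_length g | g in [set g : R -> V |
     {within [set` `[0, 1]], continuous g} /\ (forall t, 0 <= t <= 1 -> A (g t)) /\
     g 0 = x /\ g 1 = y]].

Definition intrinsic_lipschitz_on (A : set V) (f : V -> V) : Prop :=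
  exists L : R, 0 < L /\ forall x y, A x -> A y ->
    ((enorm (f x - f y))%:E <= L%:E * intrinsic_dist A x y)%E.

End Defs.

From HB Require Import structures.
From mathcomp Require Import all_boot all_order all_algebra.
From mathcomp Require Import all_classical all_reals all_analysis.
From mathcomp Require Import ring lra.
Set Implicit Arguments. Unset Strict Implicit. Unset Printing Implicit Defensive.
Import Order.TTheory GRing.Theory Num.Theory.
Import numFieldNormedType.Exports.
Local Open Scope classical_set_scope.
Local Open Scope ring_scope.

(* Take a chart phi of Th around x, with C^1 inverse psi.  If x + t n(x) lay on
   Th for some small t <> 0, then k := phi (x + t n(x)) - phi x would be a flat
   vector with |k| = O(|t|) and psi (phi x + k) = x + t n(x).  Since
   'd psi (phi x) k is tangent to Th, pairing with n(x) gives
   t = <n(x), t n(x) - 'd psi (phi x) k> = o(|k|) = o(|t|), which is absurd.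
   Hence both open normal segments at x miss Th.  A straight segment is an
   admissible curve for the intrinsic distance, so mu is Lipschitz along each of
   them, and the one-sided limit exists by Cauchy's criterion. *)

Section Analysis.
Variable R : realType.

Lemma diff_remainder_near (V W : normedModType R) (f : V -> W) x eps :
  differentiable f x -> 0 < eps ->
  \forall h \near (0 : V), `|f (h + x) - f x - 'd f x h| <= eps * `|h|.
Proof.
move=> df eps0; have /eqaddoP/(_ eps eps0) := diff_locally df.
by apply: filterS => h /=; rewrite opprD addrA.
Qed.

Lemma diff_lipschitz_near (V W : normedModType R) (f : V -> W) x :
  differentiable f x ->
  exists2 C, 0 < C & \forall h \near (0 : V), `|f (h + x) - f x| <= C * `|h|.
Proof.
move=> df; have [k k0 dfk] := linear_lipschitz (diff_continuous df).
exists (k + 1); first by rewrite addr_gt0.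
near=> h.
have rem : `|f (h + x) - f x - 'd f x h| <= 1 * `|h|.
  by near: h; exact: diff_remainder_near.
rewrite mulrDl; apply: le_trans (lerD (dfk h) rem).
by rewrite -[X in `|X| <= _](subrK ('d f x h)) addrC ler_normD.
Unshelve. all: by end_near. Qed.

Lemma diff_lipschitz_line_near (V W : normedModType R) (f : V -> W) x v :
  differentiable f x ->
  exists2 C, 0 < C & \forall t \near (0 : R), `|f (x + t *: v) - f x| <= C * `|t|.
Proof.
move=> df; have [C C0 fC] := diff_lipschitz_near df.
exists (C * (`|v| + 1)); first by rewrite mulr_gt0 // ltr_wpDl.
have tv0 : (fun t : R => t *: v) @ 0 --> (0 : V).
  by rewrite -(scale0r v); exact: cvgZr_tmp cvg_id.
near=> t.
have : `|f (t *: v + x) - f x| <= C * `|t *: v| by near: t; exact: tv0 _ fC.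
rewrite [t *: v + x]addrC normrZ => /le_trans; apply.
by rewrite -mulrA ler_pM2l // mulrC ler_wpM2r // lerDl.
Unshelve. all: by end_near. Qed.

Lemma continuous_line (V : normedModType R) (w v : V) :
  continuous (fun t : R => w + t *: v).
Proof. by move=> t; apply: cvgD; [exact: cvg_cst | exact: cvgZr_tmp]. Qed.

Lemma is_diff_line (V : normedModType R) (w v : V) (t : R) :
  is_diff t (fun t : R => w + t *: v) ( *:%R ^~ v).
Proof.
apply: (is_diff_eq (is_diffD (is_diff_cst w t) (is_diff_scalel t v))).
by rewrite add0r.
Qed.

Lemma differentiable_comp_line (V W : normedModType R) (g : V -> W) w v t :
  differentiable g (w + t *: v) ->
  differentiable (g \o (fun t : R => w + t *: v)) t.
Proof.
by move=> dg; have [dl _] := @is_diff_line _ w v t; exact: differentiable_comp.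
Qed.

Lemma derive1_comp_line (V W : normedModType R) (g : V -> W) w v t :
  differentiable g (w + t *: v) ->
  derive1 (g \o (fun t : R => w + t *: v)) t = 'd g (w + t *: v) v.
Proof.
move=> dg; have [dl dlE] := @is_diff_line _ w v t.
have dgl := differentiable_comp_line dg.
by rewrite derive1E' // diff_comp //= dlE /= scale1r.
Qed.

Lemma itv_oo_segment (a b h1 h2 t : R) :
  a < h1 < b -> a < h2 < b -> 0 <= t <= 1 -> a < h1 + t * (h2 - h1) < b.
Proof.
move=> /andP[? ?] /andP[? ?] /andP[? ?]; apply/andP.
by have [?|?] := lerP h1 h2; split; nra.
Qed.

(* Stated for matrices: they are complete and normed, but carry no
   completeNormedModType instance. *)
Lemma lipschitz_cvg_at_right m n (f : R -> 'M[R]_(m, n)) a δ L :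
  0 < δ -> 0 < L ->
  (forall h1 h2, a < h1 < a + δ -> a < h2 < a + δ ->
     `|f h1 - f h2| <= L * `|h1 - h2|) ->
  cvg (f @ a^'+).
Proof.
move=> δ0 L0 lipf; apply/cauchy_cvgP; apply: cauchy_exP => eps eps0.
have [r [r0 rδ Lr]] : exists r, [/\ 0 < r, r < δ & L * r < eps].
  exists (Num.min (δ / 2) (eps / (2 * L))); split.
  - by rewrite lt_min !divr_gt0 ?mulr_gt0.
  - by rewrite gt_min ltr_pdivrMr // ltr_pMr // ltr1n.
  - apply: (@le_lt_trans _ _ (L * (eps / (2 * L)))).
      by rewrite ler_pM2l // ge_min lexx orbT.
    have -> : L * (eps / (2 * L)) = eps / 2 by field; rewrite gt_eqF.
    lra.
exists (f (a + r)).
suff : \forall h \near a^'+, ball (f (a + r)) eps (f h) by [].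
near=> h.
have ah : a < h by near: h; exact: nbhs_right_gt.
have hr : h < a + r by near: h; apply: nbhs_right_lt; rewrite ltrDl.
rewrite -ball_normE /ball_ /=; apply: le_lt_trans (lipf _ _ _ _) _; [lra|lra|].
by rewrite gtr0_norm; nra.
Unshelve. all: by end_near. Qed.

End Analysis.

Section Euclidean.
Variables (R : realType) (d : nat).
Notation V := 'rV[R]_d.
Implicit Types (a b c : V).

Lemma edotDr a b c : edot a (b + c) = edot a b + edot a c.
Proof. by rewrite /edot -big_split /=; apply: eq_bigr => i _; rewrite mxE mulrDr. Qed.

Lemma edotZr a k b : edot a (k *: b) = k * edot a b.
Proof. by rewrite /edot mulr_sumr; apply: eq_bigr => i _; rewrite mxE mulrCA. Qed.

Lemma edotBr a b c : edot a (b - c) = edot a b - edot a c.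
Proof. by rewrite edotDr -scaleN1r edotZr mulN1r. Qed.

Lemma edotZl a k b : edot (k *: a) b = k * edot a b.
Proof. by rewrite /edot mulr_sumr; apply: eq_bigr => i _; rewrite mxE mulrA. Qed.

Lemma edot_ge0 a : 0 <= edot a a.
Proof. by apply: sumr_ge0 => i _; rewrite -expr2 sqr_ge0. Qed.

Lemma edot_unit a : enorm a = 1 -> edot a a = 1.
Proof. by move=> a1; rewrite -(sqr_sqrtr (edot_ge0 a)) -/(enorm a) a1 expr1n. Qed.

Lemma enormZ k a : enorm (k *: a) = `|k| * enorm a.
Proof. by rewrite /enorm edotZl edotZr mulrA -expr2 sqrtrM ?sqr_ge0 // sqrtr_sqr. Qed.

Lemma mx_norm_entry_le a i : `|a 0 i| <= `|a|.
Proof. by rewrite [leRHS]mx_normrE (bigD1 (0, i)) //= le_max lexx. Qed.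

Lemma mx_norm_le_enorm a : `|a| <= enorm a.
Proof.
have [->|] := eqVneq `|a| 0; first exact: sqrtr_ge0.
move=> /(@mx_norm_neq0 _ _ _ a) [[i j] /= aij]; rewrite [leLHS]aij (ord1 i).
rewrite /enorm -(sqrtr_sqr (a 0 j)) ler_sqrt ?edot_ge0 // /edot.
rewrite (bigD1 j) //= -expr2 lerDl; apply: sumr_ge0 => k _; by rewrite -expr2 sqr_ge0.
Qed.

Lemma edot_le_sum_norm a b : `|edot a b| <= (\sum_i `|a 0 i|) * `|b|.
Proof.
rewrite /edot mulr_suml; apply: le_trans (ler_norm_sum _ _ _) _.
apply: ler_sum => i _; rewrite normrM; apply: ler_wpM2l => //; exact: mx_norm_entry_le.
Qed.

Lemma intrinsic_dist_le_segment (A : set V) a b :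
  (forall t, 0 <= t <= 1 -> A (a + t *: (b - a))) ->
  (intrinsic_dist A a b <= (enorm (b - a))%:E)%E.
Proof.
move=> segA; pose g t := a + t *: (b - a).
apply: le_trans (ereal_inf_lbound _) _.
  exists g => //; split; first exact/continuous_subspaceT/continuous_line.
  by split=> //; rewrite /g scale0r addr0 scale1r addrC subrK.
apply: ge_ereal_sup => l [k [t [t0 tk t_incr ->]]]; rewrite lee_fin.
have -> : \sum_(1 <= i < k.+1) enorm (g (t i) - g (t i.-1)) =
          \sum_(0 <= i < k) (t i.+1 - t i) * enorm (b - a).
  rewrite big_add1 /=; apply: eq_big_nat => i /andP[_ ik].
  by rewrite /g opprD addrACA subrr add0r -scalerBl enormZ ger0_norm // subr_ge0 t_incr.
by rewrite -big_distrl /= telescope_sumr // tk t0 subr0 mul1r.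
Qed.

Lemma intrinsic_lipschitz_on_line (A : set V) f x v α β :
  intrinsic_lipschitz_on A f -> (forall h, α < h < β -> A (x + h *: v)) ->
  exists2 L, 0 < L & forall h1 h2, α < h1 < β -> α < h2 < β ->
    `|f (x + h1 *: v) - f (x + h2 *: v)| <= L * enorm v * `|h1 - h2|.
Proof.
move=> [L [L0 lipf]] lineA; exists L => // h1 h2 h1I h2I.
have segA t : 0 <= t <= 1 ->
    A (x + h1 *: v + t *: (x + h2 *: v - (x + h1 *: v))).
  move=> t01; have -> : x + h1 *: v + t *: (x + h2 *: v - (x + h1 *: v)) =
                        x + (h1 + t * (h2 - h1)) *: v.
    by rewrite opprD addrACA subrr add0r -scalerBl scalerA -addrA -scalerDl.
  exact/lineA/itv_oo_segment.
have := intrinsic_dist_le_segment segA.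
rewrite opprD addrACA subrr add0r -scalerBl enormZ distrC => dist.
apply: le_trans (mx_norm_le_enorm _) _; rewrite -lee_fin.
apply: le_trans (lipf _ _ (lineA _ h1I) (lineA _ h2I)) _.
by rewrite mulrAC -mulrA EFinM; apply: lee_wpmul2l; rewrite // lee_fin ltW.
Qed.

End Euclidean.

Section Hypersurface.
Variables (R : realType) (d : nat).
Notation V := 'rV[R]_d.
Local Notation flat := (@flat_hyperplane R d).

Lemma flatD (a b : V) : flat a -> flat b -> flat (a + b).
Proof. by move=> fa fb i di; rewrite mxE fa // fb // addr0. Qed.

Lemma flatZ k (a : V) : flat a -> flat (k *: a).
Proof. by move=> fa i di; rewrite mxE fa // mulr0. Qed.

Lemma flatB (a b : V) : flat a -> flat b -> flat (a - b).
Proof. by move=> fa fb; rewrite -scaleN1r; exact/flatD/flatZ. Qed.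

Lemma near0_line (w v : V) (P : set V) :
  nbhs w P -> \forall t \near (0 : R), P (w + t *: v).
Proof.
have : (fun t : R => w + t *: v) @ 0 --> w.
  by rewrite -[X in _ --> X]addr0 -(scale0r v); exact: continuous_line.
by move=> + Pw; apply.
Qed.

Definition flat_chart (Th U W : set V) (phi psi : V -> V) : Prop :=
  [/\ C1_on W psi, (forall y, U y -> W (phi y) /\ psi (phi y) = y),
      (forall y, Th y -> U y -> flat (phi y)) &
      (forall w, flat w -> W w -> Th (psi w))].

Lemma C1_hypersurface_chart (Th : set V) x : C1_hypersurface Th -> Th x ->
  exists U W (phi psi : V -> V),
    [/\ open U, U x, differentiable phi x & flat_chart Th U W phi psi].
Proof.
move=> [_ charts] Thx.
have [U [W [phi [Ux [[oU [_ [[_ [dphi _]] [psi [C1psi [inv _]]]]]] img]]]]] :=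
  charts x Thx.
exists U, W, phi, psi; split=> //; first exact: dphi.
split=> // [y Thy Uy|w fw Ww].
  have : (phi @` (Th `&` U)) (phi y) by exists y.
  by rewrite img => -[].
have : (flat `&` W) w by [].
by rewrite -img => -[y [Thy Uy] <-]; rewrite (inv y Uy).2.
Qed.

Lemma C1_curve_in_line_image (Th W : set V) (psi : V -> V) w v :
  C1_on W psi -> W w -> (forall t, W (w + t *: v) -> Th (psi (w + t *: v))) ->
  C1_curve_in Th (psi \o (fun t : R => w + t *: v)).
Proof.
move=> [oW [dpsi cpsi]] Ww lineTh.
have /nbhs_norm0P[e /= e0 lineW] := near0_line v (open_nbhs_nbhs (conj oW Ww)).
have eI t : t \in [set` `]-e, e[] -> W (w + t *: v).
  by rewrite inE /= in_itv /= => tI; apply: lineW; rewrite /= ltr_norml.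
exists e; split=> //; split; first by move=> t /lineW /lineTh.
split.
  by move=> t /lineW Wt; apply/diff_derivable/differentiable_comp_line/dpsi.
apply: (@subspace_eq_continuous _ _ _ (fun t : R => 'd psi (w + t *: v) v)).
  by move=> t /eI Wt; apply/esym/derive1_comp_line/dpsi.
rewrite continuous_open_subspace; last exact: interval_open.
move=> t /eI Wt.
apply: (@continuous_comp _ _ _ (fun t : R => w + t *: v) (fun y => 'd psi y v)).
  exact: continuous_line.
by have := cpsi v; rewrite continuous_open_subspace // => /(_ _ (mem_set Wt)).
Qed.

Lemma normal_orthogonal_chart (Th U W : set V) (phi psi n : V -> V) x v :
  normal_vector Th n -> Th x -> U x -> flat_chart Th U W phi psi -> flat v ->
  edot (n x) ('d psi (phi x) v) = 0.
Proof.
move=> [_ [_ n_orth]] Thx Ux [C1psi inv flatTh Thflat] fv.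
have [Wx psix] := inv x Ux.
have lineTh t : W (phi x + t *: v) -> Th (psi (phi x + t *: v)).
  exact/Thflat/flatD/flatZ/fv/flatTh.
have g0 : (psi \o (fun t : R => phi x + t *: v)) 0 = x by rewrite /= scale0r addr0.
have := n_orth x Thx _ (C1_curve_in_line_image C1psi Wx lineTh) g0.
have [_ [dpsi _]] := C1psi.
by rewrite derive1_comp_line scale0r addr0 //; exact: dpsi.
Qed.

Lemma diff_transversal_near (psi : V -> V) w nu C :
  differentiable psi w -> edot nu nu = 1 -> 0 < C ->
  \forall t \near (0 : R), forall k, `|k| <= C * `|t| ->
    psi (k + w) = psi w + t *: nu -> edot nu ('d psi w k) = 0 -> t = 0.
Proof.
move=> dpsi nu1 C0.
pose S := \sum_i `|nu 0 i| + 1.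
have S0 : 0 < S by rewrite ltr_wpDl ?sumr_ge0.
have eps0 : 0 < (2 * S * C)^-1 by rewrite invr_gt0 !mulr_gt0.
have /nbhs_norm0P[r /= r0 rem] := diff_remainder_near dpsi eps0.
have rC0 : 0 < r / C by rewrite divr_gt0.
near=> t => k kt psik k_orth.
have tr : `|t| < r / C by near: t; apply: (@nbhs0_lt _ R^o).
have remk : `|t *: nu - 'd psi w k| <= (2 * S * C)^-1 * `|k|.
  have kr : `|k| < r by apply: le_lt_trans kt _; rewrite mulrC -ltr_pdivlMr.
  by have := rem _ kr; rewrite /= psik [psi w + _]addrC addrK.
have tE : t = edot nu (t *: nu - 'd psi w k).
  by rewrite edotBr edotZr nu1 k_orth mulr1 subr0.
have : `|t| <= S * ((2 * S * C)^-1 * (C * `|t|)).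
  rewrite {1}tE; apply: le_trans (edot_le_sum_norm _ _) _.
  apply: ler_pM; rewrite ?sumr_ge0 //; first by rewrite /S lerDl.
  by apply: le_trans remk _; rewrite ler_wpM2l // ltW.
have -> : S * ((2 * S * C)^-1 * (C * `|t|)) = `|t| / 2 by field; rewrite !gt_eqF.
by move=> ?; apply/eqP; rewrite -normr_le0; lra.
Unshelve. all: by end_near. Qed.

Lemma normal_line_off_hypersurface (Th : set V) n x :
  C1_hypersurface Th -> normal_vector Th n -> Th x ->
  \forall t \near (0 : R), t != 0 -> ~ Th (x + t *: n x).
Proof.
move=> hyp nrm Thx.
have [U [W [phi [psi [oU Ux dphi chart]]]]] := C1_hypersurface_chart hyp Thx.
have [[_ [dpsi _]] inv flatTh _] := chart.
have [Wx psix] := inv x Ux.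
have n1 : enorm (n x) = 1 by case: nrm => _ [+ _]; apply.
have [C C0 phiC] := diff_lipschitz_line_near (n x) dphi.
have transv := diff_transversal_near (dpsi _ Wx) (edot_unit n1) C0.
have lineU := near0_line (n x) (open_nbhs_nbhs (conj oU Ux)).
apply: filterS3 transv lineU phiC => t transvt Ut kC /eqP t0 Tht.
apply/t0/(transvt _ kC).
  by rewrite subrK (inv _ Ut).2 psix.
apply/(normal_orthogonal_chart nrm Thx Ux chart)/flatB; exact: flatTh.
Qed.

End Hypersurface.

Theorem lemma2 (R : realType) (d : nat) (Th : set 'rV[R]_d)
    (mu n : 'rV[R]_d -> 'rV[R]_d) :
  C1_hypersurface Th -> orientable Th -> positive_reach Th ->
  intrinsic_lipschitz_on (~` Th) mu ->
  normal_vector Th n ->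
  forall x, Th x -> forall s : R, (s = 1 \/ s = -1) ->
    exists l : 'rV[R]_d, (fun h : R => mu (x + (s * h) *: n x)) @ 0^'+ --> l.
Proof.
move=> hyp _ _ lip nrm x Thx s s_pm1.
have /nbhs_norm0P[e /= e0 offTh] := normal_line_off_hypersurface hyp nrm Thx.
have s1 : `|s| = 1 by case: s_pm1 => ->; rewrite ?normrN normr1.
have sn1 : enorm (s *: n x) = 1.
  by rewrite enormZ s1 mul1r; case: nrm => _ [+ _]; apply.
have lineA h : 0 < h < e -> (~` Th) (x + h *: (s *: n x)).
  move=> /andP[h0 he]; rewrite scalerA; apply: offTh.
    by rewrite /= normrM s1 mulr1 gtr0_norm.
  by apply: mulf_neq0; [exact: lt0r_neq0 | rewrite -normr_eq0 s1 oner_eq0].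
have [L L0 lipL] := intrinsic_lipschitz_on_line lip lineA.
have : cvg ((fun h => mu (x + h *: (s *: n x))) @ 0^'+).
  apply: (lipschitz_cvg_at_right (a := 0) e0 L0) => h1 h2; rewrite add0r => h1I h2I.
  by rewrite -[L]mulr1 -sn1 lipL.
under eq_fun do rewrite scalerA mulrC.
by move=> /cvg_ex[l]; exists l.
Qed.
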